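(* Let $f$ satisfy the $L$-descent condition for some $L>0$ and let $\{x^k\}$ be generated by Algorithm IRG with $\rho_k=\varepsilon_k$ for all $k$, where the stepsizes are either diminishing ($t_k>0$, $t_k\downarrow0$, $\sum_{k=1}^\infty t_k=\infty$) or of constant type (there exist $\delta\in(0,2)$ and $\delta'>0$ with $\delta'\le\frac{2-\delta}{L}$ and $t_k\in[\delta',\frac{2-\delta}{L}]$ for all $k$). Assume $\inf_k f(x^k)>-\infty$. Then: (i) $\varepsilon_k\downarrow0$ and $r_k\downarrow0$; (ii) every accumulation point of $\{x^k\}$ is a stationary point of $f$; (iii) if $\{x^k\}$ is bounded, its set of accumulation points is nonempty, compact and connected; (iv) if $\{x^k\}$ has an isolated accumulation point, then $\{x^k\}$ converges to it. Moreover, in the constant-type case, $\nabla f(x^k)\to0$ as $k\to\infty$.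
   Context: Algorithm IRG (general inexact reduced gradient framework). Let $f:\mathbb R^n\to\mathbb R$ be continuously differentiable. Parameters: initial point $x^1\in\mathbb R^n$, initial radii $\varepsilon_1>0$, $r_1>0$, reduction factors $\mu,\theta\in(0,1)$, and a sequence $\{\rho_k\}$ of positive numbers. For $k=1,2,\dots$: (1) choose $g^k\in\mathbb R^n$ with $\|g^k-\nabla f(x^k)\|\le\min\{\varepsilon_k,\rho_k\}$; (2) if $\|g^k\|\le r_k+\varepsilon_k$, set $r_{k+1}=\mu r_k$, $\varepsilon_{k+1}=\theta\varepsilon_k$, $d^k=0$; otherwise set $r_{k+1}=r_k$, $\varepsilon_{k+1}=\varepsilon_k$ and $d^k=-\frac{\|g^k\|-\varepsilon_k}{\|g^k\|}g^k$; (3) choose a stepsize $t_k>0$ by some rule; (4) set $x^{k+1}=x^k+t_kd^k$. $f$ satisfies the $L$-descent condition if $f(y)\le f(x)+\langle\nabla f(x),y-x\rangle+\frac L2\|y-x\|^2$ for all $x,y\in\mathbb R^n$. *)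

From HB Require Import structures.
From mathcomp Require Import all_boot all_order all_algebra.
From mathcomp Require Import all_classical all_reals all_analysis.
Set Implicit Arguments. Unset Strict Implicit. Unset Printing Implicit Defensive.
Import Order.TTheory GRing.Theory Num.Theory.
Import numFieldNormedType.Exports.
Local Open Scope classical_set_scope.
Local Open Scope ring_scope.

(* Euclidean inner product and Euclidean norm on R^n = 'rV[R]_n
   (the library's norm on matrices is the max-norm, so we define ours). *)
Definition dotv {R : realType} {n : nat} (u v : 'rV[R]_n) : R :=
  \sum_(i < n) u 0 i * v 0 i.
Definition enorm {R : realType} {n : nat} (v : 'rV[R]_n) : R :=
  Num.sqrt (dotv v v).

Definition C1_with_gradient {R : realType} {n : nat}
  (f : 'rV[R]_n -> R) (gf : 'rV[R]_n -> 'rV[R]_n) : Prop :=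
  (forall x, differentiable f x /\ forall v, 'D_v f x = dotv (gf x) v)
  /\ continuous gf.

Definition L_descent {R : realType} {n : nat}
  (f : 'rV[R]_n -> R) (gf : 'rV[R]_n -> 'rV[R]_n) (L : R) : Prop :=
  forall x y, f y <= f x + dotv (gf x) (y - x) + L / 2 * enorm (y - x) ^+ 2.

(* Sequences generated by Algorithm IRG (indices shifted: iteration k = 1,2,...
   of the paper is index k-1 = 0,1,... here). *)
Definition IRG_sequence {R : realType} {n : nat}
  (gf : 'rV[R]_n -> 'rV[R]_n) (mu theta : R) (rho : nat -> R)
  (x g d : nat -> 'rV[R]_n) (eps r t : nat -> R) : Prop :=
  [/\ 0 < eps 0%N /\ 0 < r 0%N, 0 < mu < 1, 0 < theta < 1,
      (forall k, 0 < rho k) &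
      forall k,
      [/\ enorm (g k - gf (x k)) <= Num.min (eps k) (rho k),
          (if enorm (g k) <= r k + eps k then
             [/\ r k.+1 = mu * r k, eps k.+1 = theta * eps k & d k = 0]
           else
             [/\ r k.+1 = r k, eps k.+1 = eps k &
                 d k = - ((enorm (g k) - eps k) / enorm (g k)) *: g k]),
          0 < t k &
          x k.+1 = x k + t k *: d k]].

Definition diminishing_steps {R : realType} (t : nat -> R) : Prop :=
  [/\ (forall k, 0 < t k), (forall k, t k.+1 <= t k), t @ \oo --> 0
    & series t @ \oo --> +oo].

Definition constant_type_steps {R : realType} (L : R) (t : nat -> R) : Prop :=
  exists delta delta' : R,
    [/\ 0 < delta < 2, 0 < delta', delta' <= (2 - delta) / L &
        forall k, delta' <= t k <= (2 - delta) / L].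

Definition acc_points {R : realType} {n : nat} (x : nat -> 'rV[R]_n)
  : set 'rV[R]_n := cluster (x @ \oo).

Definition isolated_in {T : topologicalType} (A : set T) (p : T) : Prop :=
  A p /\ exists U, nbhs p U /\ U `&` A = [set p].

(* On a serious step [d k = - (|g k| - eps k) / |g k| *: g k] and
   [|g k - grad f (x k)| <= eps k], whence [<grad f (x k), d k> <= - |d k|^2]; the L-descent
   condition then gives [f (x k.+1) <= f (x k) - kap * t k * |d k|^2] with [kap > 0] under
   either stepsize rule (for diminishing steps once [t k < 1 / L]).  As [f] is bounded below
   and [sum t k = +oo], [|d k|] cannot stay above [r k] forever, so null steps occur
   infinitely often and [eps k], [r k] decrease geometrically to [0]; moreover
   [|grad f (x k)| <= |d k| + r k + 2 eps k].  Near a nonstationary accumulation point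
   [|d k|] is bounded below, and then the distance travelled is bounded by the drop of [f],
   which is eventually small: the iterates would get trapped there, so [|d k|] could not
   become small again.  Finally [t k * |d k| -> 0] gives [x k.+1 - x k -> 0], and the classical
   argument of Ostrowski yields (iii) and (iv). *)

From HB Require Import structures.
From mathcomp Require Import all_boot all_order all_algebra.
From mathcomp Require Import all_classical all_reals all_analysis.
From mathcomp Require Import ring lra zify.
Import Order.TTheory GRing.Theory Num.Theory.
Import numFieldNormedType.Exports.
Local Open Scope classical_set_scope.
Local Open Scope ring_scope.

Section EuclideanNorm.
Context {R : realType} {n : nat}.
Implicit Types u v w : 'rV[R]_n.

Lemma dotvC u v : dotv u v = dotv v u.
Proof. by apply: eq_bigr => i _; rewrite mulrC. Qed.

Lemma dotvDl u w v : dotv (u + w) v = dotv u v + dotv w v.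
Proof. by rewrite /dotv -big_split; apply: eq_bigr => i _; rewrite mxE mulrDl. Qed.

Lemma dotvDr u v w : dotv u (v + w) = dotv u v + dotv u w.
Proof. by rewrite dotvC dotvDl !(dotvC u). Qed.

Lemma dotvZl a u v : dotv (a *: u) v = a * dotv u v.
Proof. by rewrite /dotv mulr_sumr; apply: eq_bigr => i _; rewrite mxE mulrA. Qed.

Lemma dotvZr a u v : dotv u (a *: v) = a * dotv u v.
Proof. by rewrite dotvC dotvZl dotvC. Qed.

Lemma dotvNl u v : dotv (- u) v = - dotv u v.
Proof. by rewrite -scaleN1r dotvZl mulN1r. Qed.

Lemma dotvv_ge0 v : 0 <= dotv v v.
Proof. by apply: sumr_ge0 => i _; rewrite -expr2 sqr_ge0. Qed.

Lemma enorm_ge0 v : 0 <= enorm v.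
Proof. exact: sqrtr_ge0. Qed.

Lemma enorm_sqr v : enorm v ^+ 2 = dotv v v.
Proof. by rewrite sqr_sqrtr // dotvv_ge0. Qed.

Lemma enormZ a v : enorm (a *: v) = `|a| * enorm v.
Proof.
by rewrite /enorm dotvZl dotvZr mulrA -expr2 sqrtrM ?sqr_ge0 // sqrtr_sqr.
Qed.

Lemma enormN v : enorm (- v) = enorm v.
Proof. by rewrite -scaleN1r enormZ normrN normr1 mul1r. Qed.

Lemma enorm0 : enorm (0 : 'rV[R]_n) = 0.
Proof. by rewrite -(scale0r 0) enormZ normr0 mul0r. Qed.

Lemma dotv_eq0_coef v i : dotv v v = 0 -> v 0 i = 0.
Proof.
have sq_ge0 j : 0 <= v 0 j * v 0 j by rewrite -expr2 sqr_ge0.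
move/psumr_eq0P => /(_ (fun j _ => sq_ge0 j)) /(_ i isT) /eqP.
by rewrite mulf_eq0 orbb => /eqP.
Qed.

Lemma dotv_le_enorm u v : dotv u v <= enorm u * enorm v.
Proof.
have [u0|/negPf u_neq0] := eqVneq (dotv u u) 0.
  rewrite [dotv u v]big1 ?mulr_ge0 ?enorm_ge0 // => i _.
  by rewrite dotv_eq0_coef ?mul0r.
have uu_gt0 : 0 < dotv u u by rewrite lt_def u_neq0 dotvv_ge0.
set A := dotv u u in u_neq0 uu_gt0 *; set B := dotv v v; set P := dotv u v.
(* evaluate the nonnegative quadratic [s |-> dotv (s *: u + v) (s *: u + v)] at its
   minimiser [s = - P / A] *)
have discr : P ^+ 2 <= A * B.
  have := dotvv_ge0 ((- P / A) *: u + v).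
  rewrite !dotvDl !dotvDr !dotvZl !dotvZr (dotvC v u) -/A -/B -/P.
  have -> : - P / A * (- P / A * A) + - P / A * P + (- P / A * P + B)
            = (A * B - P ^+ 2) / A by field; rewrite gt_eqF.
  by rewrite pmulr_lge0 ?invr_gt0 // subr_ge0.
have [P_le0|P_gt0] := lerP P 0; first by rewrite (le_trans P_le0) ?mulr_ge0 ?enorm_ge0.
have uv_ge0 : 0 <= enorm u * enorm v by rewrite mulr_ge0 ?enorm_ge0.
by rewrite -(@ler_pXn2r _ 2) ?nnegrE ?(ltW P_gt0) // exprMn !enorm_sqr.
Qed.

Lemma normr_le_enorm v : `|v| <= enorm v.
Proof.
rewrite [`|v|]mx_normrE; apply: bigmax_le => [|[i j] _ /=]; first exact: enorm_ge0.
rewrite (ord1 i) -(sqrtr_sqr (v 0 j)) ler_sqrt ?dotvv_ge0 //.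
by rewrite /dotv (bigD1 j) //= -expr2 lerDl; apply: sumr_ge0 => k _; rewrite -expr2 sqr_ge0.
Qed.

End EuclideanNorm.

Section IRGIteration.
Context {R : realType} {n : nat} {gf : 'rV[R]_n -> 'rV[R]_n} {mu theta : R}
  {rho : nat -> R} {x g d : nat -> 'rV[R]_n} {eps r t : nat -> R}.
Hypothesis irg : IRG_sequence gf mu theta rho x g d eps r t.

Lemma irg_step k :
  [/\ enorm (g k - gf (x k)) <= Num.min (eps k) (rho k),
      (if enorm (g k) <= r k + eps k then
         [/\ r k.+1 = mu * r k, eps k.+1 = theta * eps k & d k = 0]
       else
         [/\ r k.+1 = r k, eps k.+1 = eps k &
             d k = - ((enorm (g k) - eps k) / enorm (g k)) *: g k]),
      0 < t k &
      x k.+1 = x k + t k *: d k].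
Proof. by case: irg => _ _ _ _; apply. Qed.

Lemma t_gt0 k : 0 < t k.
Proof. by case: (irg_step k). Qed.

Lemma eps_gt0 k : 0 < eps k.
Proof.
elim: k => [|k IH]; first by case: irg => -[].
case: (irg_step k) => _; case: ifP => _ [_ -> _] _ _ //.
by case: irg => _ _ /andP[theta_gt0 _] _ _; rewrite mulr_gt0.
Qed.

Lemma r_gt0 k : 0 < r k.
Proof.
elim: k => [|k IH]; first by case: irg => -[].
case: (irg_step k) => _; case: ifP => _ [-> _ _] _ _ //.
by case: irg => _ /andP[mu_gt0 _] _ _ _; rewrite mulr_gt0.
Qed.

Lemma gradient_error_le k : enorm (g k - gf (x k)) <= eps k.
Proof. by have [err _ _ _] := irg_step k; rewrite (le_trans err) // ge_min lexx. Qed.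

Lemma irg_null_or_serious k :
  (d k = 0 /\ enorm (g k) <= r k + eps k
     /\ eps k.+1 = theta * eps k /\ r k.+1 = mu * r k)
  \/ (enorm (g k) = enorm (d k) + eps k /\ r k < enorm (d k)
     /\ eps k.+1 = eps k /\ r k.+1 = r k).
Proof.
case: (irg_step k) => _; case: ifP => [|/negbT]; first by move=> ? [] *; left.
rewrite -ltNge => small [-> -> ->] _ _; right.
have G_gt0 : 0 < enorm (g k) by rewrite (lt_trans _ small) ?addr_gt0 ?r_gt0 ?eps_gt0.
have -> : enorm (- ((enorm (g k) - eps k) / enorm (g k)) *: g k) = enorm (g k) - eps k.
  rewrite enormZ normrN ger0_norm ?divr_ge0 ?enorm_ge0 //; last first.
    by rewrite subr_ge0 ltW // (le_lt_trans _ small) // lerDr ltW ?r_gt0.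
  by rewrite -mulrA mulVf ?mulr1 // gt_eqF.
by rewrite subrK ltrBrDr.
Qed.

Lemma eps_nonincr k : eps k.+1 <= eps k.
Proof.
case: (irg_null_or_serious k) => [[_ [_ [-> _]]]|[_ [_ [-> _]]]] //.
by case: irg => _ _ /andP[_ theta_lt1] _ _; rewrite ler_piMl ?ltW ?eps_gt0.
Qed.

Lemma r_nonincr k : r k.+1 <= r k.
Proof.
case: (irg_null_or_serious k) => [[_ [_ [_ ->]]]|[_ [_ [_ ->]]]] //.
by case: irg => _ /andP[_ mu_lt1] _ _ _; rewrite ler_piMl ?ltW ?r_gt0.
Qed.

Lemma normr_step_le k : `|x k.+1 - x k| <= t k * enorm (d k).
Proof.
have [_ _ t_pos ->] := irg_step k.
by rewrite addrC addKr (le_trans (normr_le_enorm _)) // enormZ gtr0_norm.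
Qed.

Lemma normr_gradient_le k : `|gf (x k)| <= enorm (d k) + r k + 2 * eps k.
Proof.
have enorm_g_le : enorm (g k) <= enorm (d k) + r k + eps k.
  case: (irg_null_or_serious k) => [[-> [le_g _]]|[-> [r_lt _]]].
    by rewrite enorm0 add0r.
  by rewrite lerD2r lerDl ltW ?r_gt0.
have -> : gf (x k) = g k - (g k - gf (x k)) by rewrite subKr.
rewrite (le_trans (ler_normB _ _)) //.
rewrite (le_trans (lerD (normr_le_enorm _) (normr_le_enorm _))) //.
by rewrite mulr2n mulrDl mul1r addrA lerD ?gradient_error_le.
Qed.

Lemma dotv_gradient_d_le k : dotv (gf (x k)) (d k) <= - enorm (d k) ^+ 2.
Proof.
case: (irg_null_or_serious k) => [[-> _]|[eG [r_lt _]]].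
  by rewrite enorm0 expr0n /= oppr0 /dotv big1 // => i _; rewrite mxE mulr0.
case: (irg_step k) => _; rewrite {1}eG lerD2r leNgt r_lt /= => -[_ _ dE] _ _.
set G := enorm (g k) in eG dE *; set D := enorm (d k) in eG *.
have DG : D = G - eps k by rewrite eG addrK.
have G_gt0 : 0 < G by rewrite eG (lt_le_trans (r_gt0 k)) // ler_wpDr ?ltW ?eps_gt0.
have dot_g_d : dotv (g k) (d k) = - (D * G).
  by rewrite dE dotvZr -enorm_sqr -/G DG; field; rewrite gt_eqF.
have err_d : - dotv (g k - gf (x k)) (d k) <= eps k * D.
  rewrite -dotvNl (le_trans (dotv_le_enorm _ _)) // enormN.
  by rewrite ler_wpM2r ?enorm_ge0 ?gradient_error_le.
have -> : gf (x k) = g k - (g k - gf (x k)) by rewrite subKr.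
rewrite dotvDl dotvNl dot_g_d; nra.
Qed.

Variables (f : 'rV[R]_n -> R) (L : R).
Hypothesis descent : L_descent f gf L.

Lemma f_descent k :
  f (x k.+1) <= f (x k) - t k * (1 - L * t k / 2) * enorm (d k) ^+ 2.
Proof.
have [_ _ t_pos xE] := irg_step k.
have step : x k.+1 - x k = t k *: d k by rewrite xE addrC addKr.
have := descent (x k) (x k.+1); rewrite step dotvZr enormZ gtr0_norm // => /le_trans; apply.
have := dotv_gradient_d_le k; nra.
Qed.

End IRGIteration.

Lemma nat_ind_from (P : nat -> Prop) k :
  P k -> (forall j, (k <= j)%N -> P j -> P j.+1) -> forall m, (k <= m)%N -> P m.
Proof.
move=> Pk PS; elim=> [|m IH]; first by rewrite leqn0 => /eqP <-.
by rewrite leq_eqVlt => /predU1P[<- //|]; rewrite ltnS => km; apply: PS km (IH km).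
Qed.

Lemma eventuallyS {P : nat -> Prop} :
  (\forall k \near \oo, P k) -> \forall k \near \oo, P k.+1.
Proof. by move=> [N _ PN]; exists N => // k /= Nk; apply: PN; rewrite /= leqW. Qed.

Lemma frequently_invariant_eventually (P : nat -> Prop) :
  (\forall k \near \oo, P k -> P k.+1) -> (forall N, exists2 k, (N <= k)%N & P k) ->
  \forall k \near \oo, P k.
Proof.
move=> [N _ P_inv] P_often; have [k Nk Pk] := P_often N.
exists k => // m /=; apply: nat_ind_from => // j kj; apply: P_inv.
exact: leq_trans Nk kj.
Qed.

Lemma geometric_decay_cvg0 {R : realType} {u : nat -> R} {a : R} :
  0 < a < 1 -> (forall k, 0 < u k) -> (forall k, u k.+1 <= u k) ->
  (forall N, exists2 k, (N <= k)%N & u k.+1 = a * u k) -> u @ \oo --> 0.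
Proof.
move=> /andP[a_gt0 a_lt1] u_gt0 u_nonincr contract.
have u_le k m : (k <= m)%N -> u m <= u k.
  by move: m; apply: nat_ind_from => // j _; apply: le_trans (u_nonincr j).
have u_geom j : exists K, u K <= a ^+ j * u 0%N.
  elim: j => [|j [K uK]]; first by exists 0%N; rewrite expr0 mul1r.
  have [k Kk uk] := contract K; exists k.+1.
  rewrite uk exprS -mulrA; apply: ler_wpM2l; first exact: ltW.
  exact: le_trans (u_le _ _ Kk) uK.
have pow_cvg0 : (GRing.exp a : R ^nat) @ \oo --> 0.
  by apply: cvg_expr; rewrite ger0_norm ?ltW.
apply/cvgr0Pnorm_lt => e e_gt0.
have [J _ aJ] := cvgr_lt _ pow_cvg0 _ (divr_gt0 e_gt0 (u_gt0 0%N)).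
have [K uK] := u_geom J.
exists K => // k /= Kk; rewrite gtr0_norm // (le_lt_trans (u_le _ _ Kk)) //.
by rewrite (le_lt_trans uK) // -ltr_pdivlMr ?u_gt0 //; apply: aJ => /=.
Qed.

Lemma series_cvgy_lbound {R : realType} (u : nat -> R) dl :
  0 < dl -> (forall k, dl <= u k) -> series u @ \oo --> +oo.
Proof.
move=> dl_gt0 u_ge; apply/cvgryPge => M.
have series_ge k : k%:R * dl <= series u k.
  elim: k => [|k IH]; first by rewrite mul0r /series /= big_geq.
  by rewrite seriesSr -natr1 mulrDl mul1r lerD.
near=> k; apply: le_trans (series_ge k); rewrite -ler_pdivrMr //.
by near: k; exact: nbhs_infty_ger.
Unshelve. all: by end_near.
Qed.

Section SufficientDecrease.
Context {R : realType} {F D t : nat -> R} {K0 : nat} {kap lb : R}.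
Hypothesis kap_gt0 : 0 < kap.
Hypothesis t_pos : forall k, 0 < t k.
Hypothesis D_nneg : forall k, 0 <= D k.
Hypothesis F_lb : forall k, lb <= F k.
Hypothesis F_decr : forall {k}, (K0 <= k)%N -> F k.+1 <= F k - kap * t k * D k ^+ 2.

Lemma F_nonincr {k m} : (K0 <= k)%N -> (k <= m)%N -> F m <= F k.
Proof.
move=> K0k; move: m; apply: nat_ind_from => // j kj Fj.
apply: le_trans Fj; apply: le_trans (F_decr (leq_trans K0k kj)) _.
by rewrite gerBl mulr_ge0 ?sqr_ge0 // mulr_ge0 // ltW.
Qed.

Lemma F_cauchy e : 0 < e -> \forall k \near \oo, forall m, (k <= m)%N -> F k - F m <= e.
Proof.
move=> e_gt0; apply: contrapT => not_cauchy.
(* otherwise F would drop by [e] infinitely often, which it cannot do below [lb] *)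
have drop N : exists k m, [/\ (N <= k)%N, (k <= m)%N & e < F k - F m].
  apply: contrapT => /forallNP no_drop; apply: not_cauchy; exists N => // k /= Nk m km.
  by rewrite leNgt; apply/negP => drop_km; apply: (no_drop k); exists m.
have drops j : exists2 m, (K0 <= m)%N & F m <= F K0 - j%:R * e.
  elim: j => [|j [m K0m Fm]]; first by exists K0; rewrite ?mul0r ?subr0.
  have [k [m' [mk km' drop_km]]] := drop m.
  exists m'; first by rewrite (leq_trans K0m) // (leq_trans mk).
  have := F_nonincr K0m mk; rewrite -natr1 mulrDl mul1r; lra.
have ratio_ge0 : 0 <= (F K0 - lb) / e by rewrite divr_ge0 ?subr_ge0 ?F_lb ?ltW.
have [m _ Fm] := drops (Num.Def.archi_bound ((F K0 - lb) / e)).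
have := archi_boundP ratio_ge0; rewrite ltr_pdivrMr // => big.
have := F_lb m; lra.
Qed.

Lemma tD2_cvg0 : (fun k => t k * D k ^+ 2) @ \oo --> 0.
Proof.
apply/cvgr0Pnorm_lt => e e_gt0.
have kap_e_gt0 : 0 < kap * (e / 2) by rewrite mulr_gt0 ?divr_gt0.
near=> k.
have K0k : (K0 <= k)%N by near: k; exact: nbhs_infty_ge.
have F_small : F k - F k.+1 <= kap * (e / 2).
  by near: k; apply: filterS (F_cauchy _ kap_e_gt0) => k /(_ k.+1); apply.
have := F_decr K0k; have : 0 < kap * e by rewrite mulr_gt0.
have tD2_ge0 : 0 <= t k * D k ^+ 2 := mulr_ge0 (ltW (t_pos k)) (sqr_ge0 _).
rewrite ger0_norm // -(ltr_pM2l kap_gt0); nra.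
Unshelve. all: by end_near.
Qed.

Lemma tD_cvg0 T : (forall k, t k <= T) -> (fun k => t k * D k) @ \oo --> 0.
Proof.
move=> t_le; have T_gt0 : 0 < T := lt_le_trans (t_pos 0) (t_le 0).
apply/cvgr0Pnorm_lt => e e_gt0.
have e2T_gt0 : 0 < e ^+ 2 / T by rewrite divr_gt0 ?exprn_gt0.
near=> k.
have small : t k * D k ^+ 2 < e ^+ 2 / T by near: k; exact: cvgr_lt _ tD2_cvg0 _ e2T_gt0.
have tD_ge0 : 0 <= t k * D k := mulr_ge0 (ltW (t_pos k)) (D_nneg k).
have tD2_ge0 : 0 <= t k * D k ^+ 2 := mulr_ge0 (ltW (t_pos k)) (sqr_ge0 _).
have sqr_tD : (t k * D k) ^+ 2 <= T * (t k * D k ^+ 2).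
  by rewrite exprMn expr2 -mulrA ler_wpM2r.
rewrite ger0_norm // -(@ltr_pXn2r _ 2) ?nnegrE ?(ltW e_gt0) //.
by apply: le_lt_trans sqr_tD _; rewrite mulrC -ltr_pdivlMr.
Unshelve. all: by end_near.
Qed.

Lemma D_cvg0 dl : 0 < dl -> (forall k, dl <= t k) -> D @ \oo --> 0.
Proof.
move=> dl_gt0 t_ge; apply/cvgr0Pnorm_lt => e e_gt0.
have dle2_gt0 : 0 < dl * e ^+ 2 by rewrite mulr_gt0 ?exprn_gt0.
near=> k.
have small : t k * D k ^+ 2 < dl * e ^+ 2 by near: k; exact: cvgr_lt _ tD2_cvg0 _ dle2_gt0.
have D_ge0 := D_nneg k.
rewrite ger0_norm // -(@ltr_pXn2r _ 2) ?nnegrE ?(ltW e_gt0) // -(ltr_pM2l dl_gt0).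
by rewrite (le_lt_trans _ small) // ler_wpM2r ?sqr_ge0.
Unshelve. all: by end_near.
Qed.

Lemma D_frequently_lt beta k :
  series t @ \oo --> +oo -> 0 < beta -> exists2 j, (k <= j)%N & D j < beta.
Proof.
move=> t_series beta_gt0; apply: contrapT => not_small.
have D_ge j : (k <= j)%N -> beta <= D j.
  by move=> kj; rewrite leNgt; apply/negP => Dj; apply: not_small; exists j.
set k' := maxn k K0.
have F_sum m : (k' <= m)%N -> F m <= F k' - kap * beta ^+ 2 * (series t m - series t k').
  move: m; apply: nat_ind_from => [|j k'j IH]; first by rewrite subrr mulr0 subr0.
  have kj : (k <= j)%N := leq_trans (leq_maxl _ _) k'j.
  have := F_decr (leq_trans (leq_maxr _ _) k'j).
  have : beta ^+ 2 <= D j ^+ 2 by rewrite ler_pXn2r ?nnegrE ?D_nneg ?(ltW beta_gt0) ?D_ge.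
  move/(ler_wpM2l (mulr_ge0 (ltW kap_gt0) (ltW (t_pos j)))); rewrite seriesSr; lra.
have kb_gt0 : 0 < kap * beta ^+ 2 by rewrite mulr_gt0 ?exprn_gt0.
near \oo => m.
have : (F k' - lb + 1) / (kap * beta ^+ 2) + series t k' <= series t m.
  by near: m; move/cvgryPge: t_series; apply.
rewrite -lerBrDr ler_pdivrMr // => big.
have k'm : (k' <= m)%N by near: m; exact: nbhs_infty_ge.
have := F_lb m; have := F_sum m k'm; nra.
Unshelve. all: by end_near.
Qed.

Lemma dist_le_F_drop {V : normedModType R} (y : V ^nat) beta k m :
  (forall j, `|y j.+1 - y j| <= t j * D j) -> 0 <= beta -> (K0 <= k)%N -> (k <= m)%N ->
  (forall j, (k <= j < m)%N -> beta <= D j) -> kap * beta * `|y m - y k| <= F k - F m.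
Proof.
move=> y_step beta_ge0 K0k; move: m; apply: nat_ind_from => [_|j kj IH D_ge].
  by rewrite subrr normr0 mulr0 subrr.
have D_ge_j : beta <= D j by apply: D_ge; rewrite kj ltnSn.
have IH' : kap * beta * `|y j - y k| <= F k - F j.
  by apply: IH => i /andP[ki ij]; apply: D_ge; rewrite ki ltnS ltnW.
have kb_ge0 : 0 <= kap * beta := mulr_ge0 (ltW kap_gt0) beta_ge0.
have dist : kap * beta * `|y j.+1 - y k|
            <= kap * beta * (t j * D j) + kap * beta * `|y j - y k|.
  by rewrite -mulrDr ler_wpM2l // (le_trans (ler_distD (y j) _ _)) // lerD2r y_step.
have ktD_ge0 : 0 <= kap * t j * D j.
  exact: mulr_ge0 (mulr_ge0 (ltW kap_gt0) (ltW (t_pos j))) (D_nneg j).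
have := F_decr (leq_trans K0k kj); have := ler_wpM2l ktD_ge0 D_ge_j.
rewrite expr2; nra.
Qed.
End SufficientDecrease.

Lemma separated_closedl {T : topologicalType} (A B : set T) :
  closed (A `|` B) -> separated A B -> closed A.
Proof.
move=> AB_closed [clA_B _] z clAz.
have [//|Bz] : (A `|` B) z by apply: AB_closed; apply: closureS clAz; exact: subsetUl.
by have : (closure A `&` B) z by []; rewrite clA_B.
Qed.

Lemma compact_closed_dist_gt0 {R : realType} {V : normedModType R} (E0 E1 : set V) :
  compact E0 -> closed E1 -> E0 `&` E1 = set0 ->
  exists2 de, 0 < de & forall a b, E0 a -> E1 b -> de <= `|a - b|.
Proof.
move=> E0_compact E1_closed E01; apply: contrapT => no_gap.
have close_pairs de : 0 < de -> exists a b, [/\ E0 a, E1 b & `|a - b| < de].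
  move=> de_gt0; apply: contrapT => no_pair; apply: no_gap; exists de => // a b E0a E1b.
  by rewrite leNgt; apply/negP => ab; apply: no_pair; exists a, b.
(* the points of [E0] that are [de]-close to [E1] form a proper filter base; a cluster
   point of it lies in [E0] and in [closure E1 = E1] *)
pose near_E1 de := [set a | E0 a /\ exists b, E1 b /\ `|a - b| < de].
pose G := filter_from [set de : R | 0 < de] near_E1.
have G_filter : ProperFilter G.
  apply: filter_from_proper; last first.
    by move=> de /close_pairs [a [b [E0a E1b ab]]]; exists a; split => //; exists b.
  apply: filter_from_filter; first by exists 1 => /=.
  move=> i j /= i_gt0 j_gt0; exists (Num.min i j); first by rewrite /= lt_min i_gt0.
  move=> a [E0a [b [E1b ab]]]; split; split => //; exists b; split => //;
    by rewrite (lt_le_trans ab) // ge_min lexx ?orbT.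
have G_E0 : G E0 by exists 1 => [|a []] /=.
have [q [E0q clq]] := E0_compact G G_filter G_E0.
suff : E1 q by move=> E1q; have : (E0 `&` E1) q by []; rewrite E01.
apply: E1_closed => B /nbhs_ballP [e /= e_gt0 eB].
have e2_gt0 : 0 < e / 2 by rewrite divr_gt0.
have G_near : G (near_E1 (e / 2)) by exists (e / 2).
have [a [[_ [b [E1b ab]]]]] := clq _ _ G_near (nbhsx_ballx _ _ e2_gt0).
rewrite -ball_normE /= => qa; exists b; split => //; apply: eB.
rewrite -ball_normE /= -(subrK a q) -addrA (le_lt_trans (ler_normD _ _)) //.
by rewrite (splitr e) ltrD // distrC.
Qed.

Definition fatten {R : realType} {V : normedModType R} (E : set V) (e : R) : set V :=
  \bigcup_(a in E) ball a e.

Lemma fatten_apart {R : realType} {V : normedModType R} {E E' : set V} {de : R} {y z : V} :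
  (forall a b, E a -> E' b -> de <= `|a - b|) ->
  fatten E (de / 3) y -> fatten E' (de / 3) z -> de / 3 <= `|y - z|.
Proof.
move=> E_far [a Ea ay] [b Eb bz]; rewrite -ball_normE /= in ay bz.
have := E_far a b Ea Eb; have := ler_distD y a b; have := ler_distD z y b.
by rewrite [`|z - b|]distrC; lra.
Qed.

Lemma cball_compact {R : realType} {n : nat} (c : 'rV[R]_n) e :
  compact [set z | `|c - z| <= e].
Proof.
apply: bounded_closed_compact; last exact: closed_closed_ball_.
exists (`|c| + e); split; first by rewrite num_real.
move=> M M_gt z /= cz; rewrite (le_trans _ (ltW M_gt)) //.
by rewrite -(subKr c z) (le_trans (ler_normB _ _)) // lerD2l.
Qed.

Section AccumulationPoints.
Context {R : realType} {n : nat} (x : nat -> 'rV[R]_n).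

Lemma acc_points_frequently p e N :
  acc_points x p -> 0 < e -> exists2 k, (N <= k)%N & `|p - x k| < e.
Proof.
move=> Ap e_gt0.
have tail : (x @ \oo) [set y | exists2 k, (N <= k)%N & y = x k].
  by exists N => // k /= Nk; exists k.
have [_ [[k Nk ->]]] := Ap _ _ tail (nbhsx_ballx _ _ e_gt0).
by rewrite -ball_normE; exists k.
Qed.

Lemma compact_frequently_acc (C : set 'rV[R]_n) :
  compact C -> (forall N, exists2 k, (N <= k)%N & C (x k)) ->
  exists2 q, C q & acc_points x q.
Proof.
move=> C_compact C_often.
pose tail_in N := [set y | exists k, [/\ (N <= k)%N, C (x k) & y = x k]].
pose G := filter_from [set: nat] tail_in.
have G_filter : ProperFilter G.
  apply: filter_from_proper => [|N _]; last first.
    by have [k Nk Ck] := C_often N; exists (x k), k.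
  apply: filter_from_filter => [|i j _ _]; first by exists 0%N.
  exists (maxn i j) => // y [k [ijk Ck ->]].
  by rewrite geq_max in ijk; case/andP: ijk => ik jk; split; exists k.
have G_C : G C by exists 0%N => // y [k [_ Ck ->]].
have [q [Cq clq]] := C_compact G G_filter G_C.
exists q => //; apply: cvg_cluster clq => A [N _ NA].
by exists N => // y [k [Nk _ ->]]; apply: NA.
Qed.

Lemma closed_acc_points : closed (acc_points x).
Proof. by rewrite /acc_points clusterE; apply: closed_bigI => A _; exact: closed_closure. Qed.

Lemma acc_points_sub (C : set 'rV[R]_n) :
  closed C -> (forall k, C (x k)) -> acc_points x `<=` C.
Proof.
move=> C_closed xC q; rewrite /acc_points clusterE => Aq.
by apply: C_closed; apply: Aq; exists 0%N => // k _; apply: xC.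
Qed.

Lemma eventually_notin_compact (C : set 'rV[R]_n) :
  compact C -> C `&` acc_points x = set0 -> \forall k \near \oo, ~ C (x k).
Proof.
move=> C_compact CA; apply: contrapT => not_ev.
have [|q Cq Aq] := compact_frequently_acc _ C_compact.
  move=> N; apply: contrapT => never; apply: not_ev; exists N => // k /= Nk Ck.
  by apply: never; exists k.
by have : (C `&` acc_points x) q by []; rewrite CA.
Qed.

Lemma acc_points_bounded M : (forall k, `|x k| <= M) ->
  acc_points x !=set0 /\ compact (acc_points x).
Proof.
move=> x_bounded.
have x_ball k : [set z | `|0 - z| <= M] (x k) by rewrite /= sub0r normrN.
have [q _ Aq] := compact_frequently_acc _ (cball_compact 0 M)
  (fun N => ex_intro2 _ _ N (leqnn N) (x_ball N)).
split; first by exists q.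
apply: subclosed_compact closed_acc_points (cball_compact 0 M) _.
by apply: acc_points_sub x_ball; exact: closed_closed_ball_.
Qed.

Hypothesis steps_cvg0 : (fun k => x k.+1 - x k) @ \oo --> (0 : 'rV[R]_n).

Lemma isolated_acc_point_cvg p : isolated_in (acc_points x) p -> x @ \oo --> p.
Proof.
move=> [Ap [U [/nbhs_ballP [e0 /= e0_gt0 e0U] UA]]].
move/cvgr0Pnorm_lt: steps_cvg0 => small_steps; apply/cvgrPdist_lt => e e_gt0.
set e' := Num.min e (e0 / 3).
have e'_gt0 : 0 < e' by rewrite lt_min e_gt0 divr_gt0.
have e'_le_e : e' <= e by rewrite ge_min lexx.
have e'_le_e0 : e' <= e0 / 3 by rewrite ge_min lexx orbT.
(* the annulus [e' <= |p - z| <= 2 e'] holds no accumulation point, and eventually short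
   steps cannot jump over it *)
set Z := [set z | `|p - z| <= 2 * e'] `&` ~` ball p e'.
have Z_compact : compact Z.
  apply: subclosed_compact (cball_compact p (2 * e')) _; last by move=> z [].
  by apply: closedI; [exact: closed_closed_ball_ | exact/open_closedC/ball_open].
have notZ : \forall k \near \oo, ~ Z (x k).
  apply: eventually_notin_compact => //; apply/seteqP; split => // q [[/= pq q_out] Aq].
  have : (U `&` acc_points x) q.
    by split => //; apply: e0U; rewrite -ball_normE /=; lra.
  by rewrite UA => /= qp; apply: q_out; rewrite qp; exact: ballxx.
have near_p : \forall k \near \oo, `|p - x k| < e'.
  apply: frequently_invariant_eventually => [|N]; last exact: acc_points_frequently.
  near=> k => pk; apply: contrapT => far.
  have step : `|x k.+1 - x k| < e' by near: k; exact: small_steps.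
  suff : Z (x k.+1) by near: k; exact: eventuallyS notZ.
  split; last by rewrite -ball_normE.
  have := ler_distD (x k) p (x k.+1); rewrite [`|x k - _|]distrC /=; lra.
by apply: filterS near_p => k /lt_le_trans; apply.
Unshelve. all: by end_near.
Qed.

Lemma acc_points_connected M : (forall k, `|x k| <= M) -> connected (acc_points x).
Proof.
move=> x_bounded; move/cvgr0Pnorm_lt: steps_cvg0 => small_steps.
have [_ A_compact] := acc_points_bounded _ x_bounded.
apply: contrapT => /connectedPn [E [E_neq0 AE E_sep]].
have A_E b : E b `<=` acc_points x by rewrite AE; case: b => ? ?; [right|left].
have E_closed b : closed (E b).
  have AE_closed : closed (E false `|` E true) by rewrite -AE; exact: closed_acc_points.
  case: b; last exact: separated_closedl AE_closed E_sep.
  rewrite setUC in AE_closed; rewrite separatedC in E_sep.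
  exact: separated_closedl AE_closed E_sep.
have E_compact b : compact (E b) := subclosed_compact (E_closed b) A_compact (A_E b).
have [de de_gt0 E_far] := compact_closed_dist_gt0 _ _ (E_compact false) (E_closed true)
  (separated_disjoint E_sep).
have de3_gt0 : 0 < de / 3 by rewrite divr_gt0.
pose W b := fatten (E b) (de / 3).
have W_apart b y z : W b y -> W (~~ b) z -> de / 3 <= `|y - z|.
  case: b => Wy Wz; last exact: fatten_apart E_far Wy Wz.
  by rewrite distrC; exact: fatten_apart E_far Wz Wy.
have inW : \forall k \near \oo, W false (x k) \/ W true (x k).
  have W_open b : open (W b) by apply: bigcup_open => a _; exact: ball_open.
  set Z := [set z | `|0 - z| <= M] `&` ~` W false `&` ~` W true.
  have Z_compact : compact Z.
    apply: subclosed_compact (cball_compact 0 M) _; last by move=> z [[]].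
    by apply: closedI; [apply: closedI; [exact: closed_closed_ball_|]|]; exact/open_closedC.
  have : \forall k \near \oo, ~ Z (x k).
    apply: eventually_notin_compact => //; apply/seteqP; split => // q [[[_ W0q] W1q]].
    by rewrite AE => -[] Eq; [apply: W0q | apply: W1q]; exists q => //; exact: ballxx.
  apply: filterS => k notZ; apply: contrapT => /not_orP[W0 W1].
  by apply: notZ; split => //; split => //=; rewrite sub0r normrN.
(* steps shorter than [de / 3] cannot jump from one [W b] to the other *)
have W_eventually b : \forall k \near \oo, W b (x k).
  apply: frequently_invariant_eventually => [|N].
    near=> k => Wk.
    have step : `|x k.+1 - x k| < de / 3 by near: k; exact: small_steps.
    have : W false (x k.+1) \/ W true (x k.+1) by near: k; exact: eventuallyS inW.
    case: b Wk => Wk [] // Wk1;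
      by have := W_apart _ _ _ Wk Wk1; rewrite distrC leNgt step.
  have [a Ea] := E_neq0 b.
  have [k Nk ak] := acc_points_frequently _ _ N (A_E b a Ea) de3_gt0.
  by exists k => //; exists a => //; rewrite -ball_normE.
near \oo => k.
have W0 : W false (x k) by near: k; exact: W_eventually.
have W1 : W true (x k) by near: k; exact: W_eventually.
by have := W_apart false _ _ W0 W1; rewrite subrr normr0 leNgt de3_gt0.
Unshelve. all: by end_near.
Qed.

End AccumulationPoints.

Section IRGConvergence.
Context {R : realType} {n : nat} {gf : 'rV[R]_n -> 'rV[R]_n} {mu theta : R}
  {rho : nat -> R} {x g d : nat -> 'rV[R]_n} {eps r t : nat -> R}.
Hypothesis irg : IRG_sequence gf mu theta rho x g d eps r t.
Variables (f : 'rV[R]_n -> R) (K0 : nat) (kap lb : R).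
Let F k := f (x k).
Let D k := enorm (d k).
Hypothesis kap_gt0 : 0 < kap.
Hypothesis f_lb : forall k, lb <= F k.
Hypothesis f_decr : forall k, (K0 <= k)%N -> F k.+1 <= F k - kap * t k * D k ^+ 2.
Hypothesis t_series : series t @ \oo --> +oo.

Let t_pos := t_gt0 irg.
Let D_ge0 k : 0 <= D k := enorm_ge0 (d k).

Lemma null_steps_frequently N :
  exists2 k, (N <= k)%N & eps k.+1 = theta * eps k /\ r k.+1 = mu * r k.
Proof.
apply: contrapT => no_null.
have serious k : (N <= k)%N -> r k.+1 = r k /\ r k < D k.
  move=> Nk; case: (irg_null_or_serious irg k) => [[_ [_ null]]|[_ [r_lt [_ ->]]]] //.
  by case: no_null; exists k.
have r_const k : (N <= k)%N -> r k = r N.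
  by move: k; apply: nat_ind_from => // j Nj <-; case: (serious j Nj).
have [j Nj] := D_frequently_lt kap_gt0 t_pos D_ge0 f_lb f_decr (r N) N t_series (r_gt0 irg N).
by case: (serious j Nj) => _; rewrite r_const // => /lt_trans/[apply]; rewrite ltxx.
Qed.

Lemma eps_cvg0 : eps @ \oo --> 0.
Proof.
apply: (geometric_decay_cvg0 (a := theta) _ (eps_gt0 irg) (eps_nonincr irg)).
  by case: irg => _ _ ? _ _.
by move=> N; have [k Nk [epsS _]] := null_steps_frequently N; exists k.
Qed.

Lemma r_cvg0 : r @ \oo --> 0.
Proof.
apply: (geometric_decay_cvg0 (a := mu) _ (r_gt0 irg) (r_nonincr irg)).
  by case: irg => _ ? _ _ _.
by move=> N; have [k Nk [_ rS]] := null_steps_frequently N; exists k.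
Qed.

Lemma steps_cvg0 T : (forall k, t k <= T) -> (fun k => x k.+1 - x k) @ \oo --> (0 : 'rV[R]_n).
Proof.
move=> t_le; apply/cvgr0Pnorm_lt => e e_gt0.
move/cvgr0Pnorm_lt: (tD_cvg0 kap_gt0 t_pos D_ge0 f_lb f_decr T t_le).
move=> /(_ _ e_gt0); apply: filterS => k; apply: le_lt_trans.
exact: le_trans (normr_step_le irg k) (ler_norm _).
Qed.

Lemma enorm_d_bounded_below_near p : continuous gf -> gf p != 0 ->
  exists2 de, 0 < de & \forall k \near \oo, `|p - x k| < de -> `|gf p| / 4 <= D k.
Proof.
move=> gf_cont gfp_neq0; set c := `|gf p|; have c_gt0 : 0 < c by rewrite normr_gt0.
have c2_gt0 : 0 < c / 2 by rewrite divr_gt0.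
move/cvgrPdist_lt: (gf_cont p) => /(_ _ c2_gt0) /nbhs_ballP [de /= de_gt0 deB].
exists de => //; near=> k => pk.
have gf_big : c / 2 < `|gf (x k)|.
  have := deB (x k); rewrite -ball_normE /= => /(_ pk).
  by have := ler_distD (gf (x k)) (gf p) 0; rewrite !subr0 -/c; lra.
have : r k < c / 8 by near: k; apply: cvgr_lt _ r_cvg0 _ _; rewrite divr_gt0.
have : eps k < c / 16 by near: k; apply: cvgr_lt _ eps_cvg0 _ _; rewrite divr_gt0.
have := normr_gradient_le irg k; rewrite /D; lra.
Unshelve. all: by end_near.
Qed.

Lemma acc_point_trapping p de beta : acc_points x p -> 0 < de -> 0 < beta ->
  (\forall k \near \oo, `|p - x k| < de -> beta <= D k) ->
  \forall k \near \oo, `|p - x k| < de.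
Proof.
move=> Ap de_gt0 beta_gt0 [N1 _ D_big].
have kbde_gt0 : 0 < kap * beta * (de / 2) by rewrite !mulr_gt0 ?divr_gt0.
have [N2 _ F_small] := F_cauchy kap_gt0 t_pos f_lb f_decr _ kbde_gt0.
have de2_gt0 : 0 < de / 2 by rewrite divr_gt0.
have [k k_late pk] := acc_points_frequently x _ _ (maxn K0 (maxn N1 N2)) Ap de2_gt0.
have K0k : (K0 <= k)%N by lia.
(* while the iterates stay in [ball p de], [kap * beta] times the distance travelled is
   at most the drop of [F], which is small: so they never leave *)
suff trapped m : (k <= m)%N -> forall j, (k <= j <= m)%N -> `|p - x j| < de.
  by exists k => // j /= kj; apply: (trapped j kj); rewrite kj leqnn.
move: m; apply: nat_ind_from => [j /andP[kj jk]|m km IH j /andP[kj]].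
  have -> : j = k by apply/eqP; rewrite eqn_leq jk kj.
  by rewrite (lt_trans pk) // ltr_pdivrMr // ltr_pMr // ltr1n.
rewrite leq_eqVlt ltnS => /predU1P[->|jm]; last by apply: IH; rewrite kj.
have D_ge i : (k <= i < m.+1)%N -> beta <= D i.
  move=> /andP[ki im]; apply: (D_big i); first by rewrite /=; lia.
  by apply: IH; rewrite ki -ltnS.
have drop := dist_le_F_drop kap_gt0 t_pos D_ge0 f_decr _ _ _ _ (normr_step_le irg)
  (ltW beta_gt0) K0k (leqW km) D_ge.
have dist : `|x m.+1 - x k| <= de / 2.
  rewrite -(ler_pM2l (mulr_gt0 kap_gt0 beta_gt0)) (le_trans drop) //.
  by apply: F_small; [rewrite /=; lia | exact: leqW].
by have := ler_distD (x k) p (x m.+1); rewrite [`|x k - _|]distrC; lra.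
Qed.

Lemma acc_points_stationary p : continuous gf -> acc_points x p -> gf p = 0.
Proof.
move=> gf_cont Ap; apply: contrapT => /eqP gfp_neq0.
have beta_gt0 : 0 < `|gf p| / 4 by rewrite divr_gt0 ?normr_gt0.
have [de de_gt0 D_big] := enorm_d_bounded_below_near _ gf_cont gfp_neq0.
have [N _ D_ge] : \forall k \near \oo, `|gf p| / 4 <= D k.
  by apply: filterS2 D_big (acc_point_trapping _ _ _ Ap de_gt0 beta_gt0 D_big) => k; apply.
have [j Nj] := D_frequently_lt kap_gt0 t_pos D_ge0 f_lb f_decr _ N t_series beta_gt0.
by rewrite ltNge D_ge.
Qed.

Lemma gradient_cvg0 dl : 0 < dl -> (forall k, dl <= t k) ->
  (fun k => gf (x k)) @ \oo --> (0 : 'rV[R]_n).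
Proof.
move=> dl_gt0 t_ge; apply/cvgr0Pnorm_lt => e e_gt0.
have e4_gt0 : 0 < e / 4 by rewrite divr_gt0.
near=> k.
have : D k < e / 4.
  by near: k; exact: cvgr_lt _ (D_cvg0 kap_gt0 t_pos D_ge0 f_lb f_decr _ dl_gt0 t_ge) _ e4_gt0.
have : r k < e / 4 by near: k; exact: cvgr_lt _ r_cvg0 _ e4_gt0.
have : eps k < e / 4 by near: k; exact: cvgr_lt _ eps_cvg0 _ e4_gt0.
have := normr_gradient_le irg k; rewrite /D; lra.
Unshelve. all: by end_near.
Qed.

End IRGConvergence.

Section StepsizeRules.
Context {R : realType} {n : nat} {gf : 'rV[R]_n -> 'rV[R]_n} {mu theta : R}
  {rho : nat -> R} {x g d : nat -> 'rV[R]_n} {eps r t : nat -> R}.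
Hypothesis irg : IRG_sequence gf mu theta rho x g d eps r t.
Variables (f : 'rV[R]_n -> R) (L : R).
Hypothesis L_gt0 : 0 < L.
Hypothesis descent : L_descent f gf L.

Lemma diminishing_sufficient_decrease : diminishing_steps t ->
  \forall k \near \oo, f (x k.+1) <= f (x k) - 2^-1 * t k * enorm (d k) ^+ 2.
Proof.
move=> [t_gt0 _ t_cvg0 _]; have Linv_gt0 : 0 < L^-1 by rewrite invr_gt0.
near=> k; apply: le_trans (f_descent irg _ _ descent k) _.
have Lt_lt1 : L * t k < 1.
  rewrite -(mulfV (lt0r_neq0 L_gt0)) ltr_pM2l //.
  by near: k; exact: cvgr_lt _ t_cvg0 _ Linv_gt0.
have : 0 <= t k * enorm (d k) ^+ 2 by rewrite mulr_ge0 ?sqr_ge0 ?ltW.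
nra.
Unshelve. all: by end_near.
Qed.

Lemma constant_type_sufficient_decrease : constant_type_steps L t ->
  exists2 kap, 0 < kap &
    forall k, f (x k.+1) <= f (x k) - kap * t k * enorm (d k) ^+ 2.
Proof.
move=> [de [dl [/andP[de_gt0 _] _ _ t_itv]]]; exists (de / 2); first by rewrite divr_gt0.
move=> k; apply: le_trans (f_descent irg _ _ descent k) _.
have /andP[_] := t_itv k; rewrite ler_pdivlMr // mulrC => Lt_le.
have : 0 <= t k * enorm (d k) ^+ 2 by rewrite mulr_ge0 ?sqr_ge0 ?ltW ?(t_gt0 irg).
nra.
Qed.

Lemma stepsize_rules_sufficient_decrease :
  diminishing_steps t \/ constant_type_steps L t ->
  exists K0 kap T, [/\ 0 < kap, forall k, t k <= T,
    forall k, (K0 <= k)%N -> f (x k.+1) <= f (x k) - kap * t k * enorm (d k) ^+ 2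
    & series t @ \oo --> +oo].
Proof.
case=> [dim|const].
  have [K0 _ decr] := diminishing_sufficient_decrease dim.
  have [_ t_nonincr _ t_series] := dim.
  have t_le k : t k <= t 0%N by elim: k => // k; apply: le_trans (t_nonincr k).
  by exists K0, 2^-1, (t 0%N); split; rewrite ?invr_gt0.
have [kap kap_gt0 decr] := constant_type_sufficient_decrease const.
have [de [dl [_ dl_gt0 _ t_itv]]] := const.
exists 0%N, kap, ((2 - de) / L); split => //; first by move=> k; case/andP: (t_itv k).
by apply: series_cvgy_lbound dl_gt0 _ => k; case/andP: (t_itv k).
Qed.

End StepsizeRules.

Theorem mainTheorem11 (R : realType) (n : nat)
  (f : 'rV[R]_n -> R) (gf : 'rV[R]_n -> 'rV[R]_n) (L : R)
  (mu theta : R) (x g d : nat -> 'rV[R]_n) (eps r t : nat -> R) :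
  C1_with_gradient f gf ->
  0 < L -> L_descent f gf L ->
  IRG_sequence gf mu theta eps x g d eps r t ->
  diminishing_steps t \/ constant_type_steps L t ->
  (exists m : R, forall k, m <= f (x k)) ->
  [/\ ((forall k, eps k.+1 <= eps k) /\ eps @ \oo --> 0) /\
      ((forall k, r k.+1 <= r k) /\ r @ \oo --> 0),
      (forall p, acc_points x p -> gf p = 0),
      ((exists M : R, forall k, enorm (x k) <= M) ->
         [/\ acc_points x !=set0, compact (acc_points x)
           & connected (acc_points x)]),
      (forall p, isolated_in (acc_points x) p -> x @ \oo --> p) &
      (constant_type_steps L t -> (fun k => gf (x k)) @ \oo --> (0 : 'rV[R]_n))].
Proof.
move=> [_ gf_cont] L_gt0 descent irg rule [lb f_lb].
have [K0 [kap [T [kap_gt0 t_le f_decr t_series]]]] :=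
  stepsize_rules_sufficient_decrease irg f L L_gt0 descent rule.
have x_steps := steps_cvg0 irg f K0 kap lb kap_gt0 f_lb f_decr T t_le.
split.
- split; split.
  + exact: eps_nonincr irg.
  + exact: eps_cvg0 irg f K0 kap lb kap_gt0 f_lb f_decr t_series.
  + exact: r_nonincr irg.
  + exact: r_cvg0 irg f K0 kap lb kap_gt0 f_lb f_decr t_series.
- move=> p.
  exact: acc_points_stationary irg f K0 kap lb kap_gt0 f_lb f_decr t_series p gf_cont.
- move=> [M x_bounded].
  have normr_x_le k : `|x k| <= M := le_trans (normr_le_enorm _) (x_bounded k).
  have [A_neq0 A_compact] := acc_points_bounded x M normr_x_le.
  by split => //; exact: acc_points_connected x_steps M normr_x_le.
- move=> p; exact: isolated_acc_point_cvg x_steps p.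
- move=> [de [dl [_ dl_gt0 _ t_itv]]].
  apply: (gradient_cvg0 irg f K0 kap lb kap_gt0 f_lb f_decr t_series dl dl_gt0).
  by move=> k; case/andP: (t_itv k).
Qed.
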